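(* For $w\in\mathbb N$, $\textsc{ReLU}$ networks $f:\mathbb R\to\mathbb R^2$ of width $w$ are dense in $C([0,1],\mathbb{R}^2)$ if and only if $w \ge 3$.
   Context: A neural network $f:\mathbb R^{d_x}\to\mathbb R^{d_y}$ with $L$ layers and hidden dimensions $d_1,\dots,d_{L-1}$ (set $d_0=d_x$, $d_L=d_y$) is a map $f=t_L\circ\sigma_{L-1}\circ\cdots\circ t_2\circ\sigma_1\circ t_1$, where each $t_\ell:\mathbb R^{d_{\ell-1}}\to\mathbb R^{d_\ell}$ is affine and $\sigma_\ell$ applies $\textsc{ReLU}(x)=\max\{x,0\}$ coordinatewise. The width of $f$ is $\max\{d_1,\dots,d_{L-1}\}$; the depth is arbitrary. $C([0,1],\mathbb R^2)$ is endowed with the uniform norm $\|g\|_\infty=\sup_{x\in[0,1]}\|g(x)\|_\infty$, and ''dense'' means: for every $f^*\in C([0,1],\mathbb R^2)$ and every $\varepsilon>0$ there is such a network $f$ with $\sup_{x\in[0,1]}\|f^*(x)-f(x)\|_\infty\le\varepsilon$. *)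

From Stdlib Require Import Reals List.
Open Scope R_scope.

(* Vectors of dimension d are represented as functions nat -> R of which only
   coordinates 0..d-1 are ever read. *)
Definition vec := nat -> R.

Fixpoint sum_below (n : nat) (f : nat -> R) : R :=
  match n with
  | O => 0
  | S k => sum_below k f + f k
  end.

Definition affine (din : nat) (W : nat -> nat -> R) (b : vec) (x : vec) : vec :=
  fun i => sum_below din (fun j => W i j * x j) + b i.

Definition relu (r : R) : R := Rmax r 0.

(* A layer: (output dimension d_l, weight matrix, bias). *)
Definition layer := (nat * (nat -> nat -> R) * vec)%type.

Fixpoint eval (din : nat) (ls : list layer) (x : vec) : vec :=
  match ls with
  | nil => x
  | (d, W, b) :: nil => affine din W b x
  | (d, W, b) :: rest => eval d rest (fun i => relu (affine din W b x i))
  end.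

Definition layer_dim (l : layer) : nat := fst (fst l).

Definition hidden_dims (ls : list layer) : list nat := map layer_dim (removelast ls).

Definition width (ls : list layer) : nat := fold_right Nat.max O (hidden_dims ls).

Definition net_1_2 (ls : list layer) : Prop :=
  ls <> nil /\ layer_dim (last ls (O, fun _ _ => 0, fun _ => 0)) = 2%nat.

Definition net_fun (ls : list layer) (x : R) : R * R :=
  let y := eval 1 ls (fun _ => x) in (y 0%nat, y 1%nat).

Definition norm_inf (v : R * R) : R := Rmax (Rabs (fst v)) (Rabs (snd v)).

Definition vsub (u v : R * R) : R * R := (fst u - fst v, snd u - snd v).

Definition in01 (x : R) : Prop := 0 <= x <= 1.

(* g : [0,1] -> R^2 continuous (values outside [0,1] are irrelevant) *)
Definition continuous_on01 (g : R -> R * R) : Prop :=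
  forall x, in01 x -> forall eps, eps > 0 -> exists delta, delta > 0 /\
    forall y, in01 y -> Rabs (y - x) < delta -> norm_inf (vsub (g y) (g x)) < eps.

Definition dense_width (w : nat) : Prop :=
  forall g : R -> R * R, continuous_on01 g ->
  forall eps, eps > 0 ->
  exists ls, net_1_2 ls /\ width ls = w /\
    forall x, in01 x -> norm_inf (vsub (g x) (net_fun ls x)) <= eps.

(* The piecewise linear interpolant of a function at the knots k/n is
   f(0) plus a sum of hinges c_k relu(x - k/n).  One neuron carries the current hinge, moving it
   by 1/n per layer, while two neurons accumulate the two coordinates; adding a large constant
   keeps these nonnegative, so the ReLU leaves them unchanged.

   Width two does not.  Such a network is a line in the plane followed by planar layers
   u |-> M relu(u) + b.  Replacing ReLU by a leaky ReLU of small slope and every M by a nearby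
   invertible matrix changes the network uniformly little on [0,1], but turns it into a
   bi-Lipschitz, hence injective, curve g.  Take a target running first along the horizontal
   and then along the vertical axis.  If g stays 1/5-close to it, the difference map
   (s,t) |-> g(s/3) - g(2/3 + t/3) satisfies the Poincare-Miranda sign conditions on the unit
   square, so it vanishes somewhere; this is shown by counting quarter turns of its quadrant on
   a fine grid.  That contradicts injectivity. *)

From Stdlib Require Import Reals List Lra Lia ZArith.
Open Scope R_scope.

Lemma relu_id r : 0 <= r -> relu r = r.
Proof. intros; unfold relu, Rmax; destruct (Rle_dec r 0); lra. Qed.

Lemma relu_eq0 r : r <= 0 -> relu r = 0.
Proof. intros; unfold relu, Rmax; destruct (Rle_dec r 0); lra. Qed.

Lemma relu_ge0 r : 0 <= relu r.
Proof. unfold relu, Rmax; destruct (Rle_dec r 0); lra. Qed.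

Lemma relu_lipschitz r s : Rabs (relu r - relu s) <= Rabs (r - s).
Proof.
  unfold relu, Rmax; destruct (Rle_dec r 0), (Rle_dec s 0);
  unfold Rabs; repeat destruct Rcase_abs; lra.
Qed.

Lemma Rabs_le_inv x a : Rabs x <= a -> - a <= x <= a.
Proof. unfold Rabs; destruct Rcase_abs; lra. Qed.

Lemma exists_inv_nat_lt d : 0 < d -> exists n, (1 <= n)%nat /\ / INR n < d.
Proof.
  intros Hd. destruct (INR_unbounded (/ d)) as [n Hn].
  assert (Hn1 : (1 <= n)%nat).
  { destruct n; [simpl in Hn; pose proof (Rinv_0_lt_compat d Hd); lra | lia]. }
  exists n; split; [exact Hn1|].
  rewrite <- (Rinv_inv d). apply Rinv_lt_contravar; [|exact Hn].
  apply Rmult_lt_0_compat; [apply Rinv_0_lt_compat; lra | apply lt_0_INR; lia].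
Qed.

Lemma norm_inf_fst u : Rabs (fst u) <= norm_inf u.
Proof. apply Rmax_l. Qed.

Lemma norm_inf_snd u : Rabs (snd u) <= norm_inf u.
Proof. apply Rmax_r. Qed.

Lemma norm_inf_ge0 u : 0 <= norm_inf u.
Proof. eapply Rle_trans; [apply Rabs_pos | apply norm_inf_fst]. Qed.

Lemma norm_inf_lub u c : Rabs (fst u) <= c -> Rabs (snd u) <= c -> norm_inf u <= c.
Proof. apply Rmax_lub. Qed.

Definition vadd (u v : R * R) : R * R := (fst u + fst v, snd u + snd v).
Definition vscal (r : R) (u : R * R) : R * R := (r * fst u, r * snd u).

Lemma norm_inf_add u v : norm_inf (vadd u v) <= norm_inf u + norm_inf v.
Proof.
  pose proof (norm_inf_fst u); pose proof (norm_inf_snd u);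
  pose proof (norm_inf_fst v); pose proof (norm_inf_snd v).
  apply norm_inf_lub; simpl; (eapply Rle_trans; [apply Rabs_triang|]); lra.
Qed.

Lemma norm_inf_sub u v : norm_inf (vsub u v) <= norm_inf u + norm_inf v.
Proof.
  pose proof (norm_inf_fst u); pose proof (norm_inf_snd u);
  pose proof (norm_inf_fst v); pose proof (norm_inf_snd v).
  apply norm_inf_lub; simpl; unfold Rminus;
  (eapply Rle_trans; [apply Rabs_triang|]); rewrite Rabs_Ropp; lra.
Qed.

Lemma norm_inf_sub_sym u v : norm_inf (vsub u v) = norm_inf (vsub v u).
Proof.
  unfold norm_inf, vsub; simpl.
  rewrite (Rabs_minus_sym (fst u)), (Rabs_minus_sym (snd u)). reflexivity.
Qed.

Lemma norm_inf_sub_triang a b c :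
  norm_inf (vsub a c) <= norm_inf (vsub a b) + norm_inf (vsub b c).
Proof.
  replace (vsub a c) with (vadd (vsub a b) (vsub b c))
    by (unfold vadd, vsub; simpl; f_equal; ring).
  apply norm_inf_add.
Qed.

Lemma norm_inf_scal r u : norm_inf (vscal r u) = Rabs r * norm_inf u.
Proof. unfold norm_inf, vscal; simpl. rewrite !Rabs_mult. apply RmaxRmult, Rabs_pos. Qed.

Definition clamp01 (x : R) : R := Rmax 0 (Rmin x 1).

Lemma clamp01_in01 x : in01 (clamp01 x).
Proof. unfold in01, clamp01, Rmax, Rmin; repeat destruct Rle_dec; lra. Qed.

Lemma clamp01_id x : in01 x -> clamp01 x = x.
Proof. unfold in01, clamp01, Rmax, Rmin; intros; repeat destruct Rle_dec; lra. Qed.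

Lemma clamp01_lipschitz x y : Rabs (clamp01 x - clamp01 y) <= Rabs (x - y).
Proof.
  unfold clamp01, Rmax, Rmin; repeat destruct Rle_dec;
  unfold Rabs; repeat destruct Rcase_abs; lra.
Qed.

(* Clamping extends a coordinate of [g] continuously to all of [R], as [Heine] requires. *)
Lemma continuity_pt_clamp01 (g : R -> R * R) (p : R * R -> R) :
  continuous_on01 g -> (forall u, Rabs (p u) <= norm_inf u) ->
  (forall u v, p (vsub u v) = p u - p v) ->
  forall x, continuity_pt (fun x => p (g (clamp01 x))) x.
Proof.
  intros Hg Hp Hsub x e He.
  destruct (Hg (clamp01 x) (clamp01_in01 x) e He) as [d [Hd Hclose]].
  exists d; split; [exact Hd|]. intros y [_ Hy]. simpl in *. unfold R_dist in *.
  rewrite <- Hsub. eapply Rle_lt_trans; [apply Hp|].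
  apply Hclose; [apply clamp01_in01|].
  eapply Rle_lt_trans; [apply clamp01_lipschitz | exact Hy].
Qed.

Lemma continuous_on01_uniform g : continuous_on01 g -> forall eps, 0 < eps ->
  exists d, 0 < d /\ forall x y, in01 x -> in01 y -> Rabs (x - y) < d ->
    norm_inf (vsub (g x) (g y)) <= eps.
Proof.
  intros Hg eps Heps.
  assert (Hcoord : forall p : R * R -> R, (forall u, Rabs (p u) <= norm_inf u) ->
    (forall u v, p (vsub u v) = p u - p v) ->
    exists d : posreal, forall x y, in01 x -> in01 y -> Rabs (x - y) < d ->
      Rabs (p (g x) - p (g y)) < eps).
  { intros p Hp Hsub.
    destruct (Heine _ in01 (compact_P3 0 1)
      (fun x _ => continuity_pt_clamp01 g p Hg Hp Hsub x) (mkposreal eps Heps)) as [d Hd].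
    exists d. intros x y Hx Hy Hxy. specialize (Hd x y Hx Hy Hxy). simpl in Hd.
    rewrite !clamp01_id in Hd by assumption. exact Hd. }
  destruct (Hcoord fst norm_inf_fst (fun _ _ => eq_refl)) as [d1 H1].
  destruct (Hcoord snd norm_inf_snd (fun _ _ => eq_refl)) as [d2 H2].
  exists (Rmin d1 d2). split; [apply Rmin_pos; apply cond_pos|].
  intros x y Hx Hy Hxy. pose proof (Rmin_l d1 d2). pose proof (Rmin_r d1 d2).
  apply norm_inf_lub; left; [apply H1 | apply H2]; auto; lra.
Qed.

Lemma Rabs_sub_convex a b c l e : 0 <= l <= 1 ->
  Rabs (a - b) <= e -> Rabs (a - c) <= e -> Rabs (a - (b + l * (c - b))) <= e.
Proof.
  intros Hl Hb Hc. apply Rabs_le_inv in Hb, Hc. apply Rabs_le. nra.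
Qed.

(** * Piecewise linear interpolation *)

Definition adjacent (i i' : nat) : Prop := (i' <= i + 1 /\ i <= i' + 1)%nat.

Section Interpolation.
Variables (n : nat) (f : R -> R).
Hypothesis n_pos : (1 <= n)%nat.

Definition knot (k : nat) : R := INR k / INR n.
Definition slope (k : nat) : R := INR n * (f (knot (S k)) - f (knot k)).
Definition kink (k : nat) : R :=
  match k with O => slope O | S k' => slope (S k') - slope k' end.

(* [interp n] is the piecewise linear interpolant of [f] at the knots [k / n], written
   as [f 0] plus a sum of hinges; [interp k] keeps the first [k] hinges only. *)
Fixpoint interp (k : nat) (x : R) : R :=
  match k with O => f (knot O) | S k' => interp k' x + kink k' * relu (x - knot k') end.

Fixpoint kink_mass (k : nat) : R :=
  match k with O => 0 | S k' => kink_mass k' + Rabs (kink k') end.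

Let INR_n_gt0 : 0 < INR n.
Proof. apply lt_0_INR; lia. Qed.

Lemma knot_0 : knot 0 = 0.
Proof. unfold knot; simpl; field; lra. Qed.

Lemma knot_S k : knot (S k) = knot k + / INR n.
Proof. unfold knot. rewrite S_INR. field. lra. Qed.

Lemma knot_n : knot n = 1.
Proof. unfold knot. field. lra. Qed.

Lemma knot_le j k : (j <= k)%nat -> knot j <= knot k.
Proof.
  intros H. apply le_INR in H. unfold knot, Rdiv.
  apply Rmult_le_compat_r; [left; apply Rinv_0_lt_compat|]; lra.
Qed.

Lemma knot_ge0 k : 0 <= knot k.
Proof. rewrite <- knot_0. apply knot_le. lia. Qed.

Lemma knot_in01 i : (i <= n)%nat -> in01 (knot i).
Proof.
  intros Hi. pose proof (knot_ge0 i). pose proof (knot_le i n Hi).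
  rewrite knot_n in *. unfold in01; lra.
Qed.

Lemma knot_adjacent i i' : adjacent i i' -> Rabs (knot i - knot i') <= / INR n.
Proof.
  intros [H1 H2]. pose proof (Rinv_0_lt_compat _ INR_n_gt0).
  assert (Hcases : i' = i \/ i' = S i \/ i = S i') by lia.
  destruct Hcases as [-> | [-> | ->]]; rewrite ?knot_S.
  - rewrite Rminus_diag, Rabs_R0. lra.
  - replace (knot i - (knot i + / INR n)) with (- / INR n) by ring.
    rewrite Rabs_Ropp, Rabs_pos_eq; lra.
  - replace (knot i' + / INR n - knot i') with (/ INR n) by ring.
    rewrite Rabs_pos_eq; lra.
Qed.

Lemma interp_S_on_cells m x : 0 <= x ->
  (forall j, (j <= m)%nat -> knot j <= x <= knot (S j) ->
     interp (S m) x = f (knot j) + slope j * (x - knot j)) /\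
  (knot m <= x -> interp (S m) x = f (knot m) + slope m * (x - knot m)).
Proof.
  intros Hx. induction m as [|m [IH1 IH2]].
  - cbn [interp kink]. rewrite knot_0, Rminus_0_r, relu_id by lra.
    split; [intros j Hj _; replace j with O by lia | intros _]; rewrite ?knot_0; ring.
  - change (interp (S (S m)) x)
      with (interp (S m) x + kink (S m) * relu (x - knot (S m))).
    assert (Hlast : knot (S m) <= x ->
      interp (S m) x + kink (S m) * relu (x - knot (S m))
      = f (knot (S m)) + slope (S m) * (x - knot (S m))).
    { intros Hx2. rewrite IH2 by (pose proof (knot_le m (S m) ltac:(lia)); lra).
      rewrite relu_id by lra. simpl kink. unfold slope. rewrite !knot_S in *. field. lra. }
    split; [|exact Hlast].
    intros j Hj Hjx. destruct (Nat.eq_dec j (S m)) as [->|Hne]; [apply Hlast; lra|].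
    rewrite relu_eq0 by (pose proof (knot_le (S j) (S m) ltac:(lia)); lra).
    rewrite Rmult_0_r, Rplus_0_r. apply IH1; [lia | exact Hjx].
Qed.

Lemma kink_mass_le j k : (j <= k)%nat -> kink_mass j <= kink_mass k.
Proof. induction 1; simpl; [lra|]. pose proof (Rabs_pos (kink m)); lra. Qed.

Lemma interp_abs_le k x : 0 <= x <= 1 -> Rabs (interp k x) <= Rabs (f (knot 0)) + kink_mass k.
Proof.
  intros Hx. induction k as [|k IH]; simpl; [lra|].
  assert (Hh : 0 <= relu (x - knot k) <= 1).
  { split; [apply relu_ge0|]. pose proof (knot_ge0 k).
    unfold relu, Rmax; destruct Rle_dec; lra. }
  eapply Rle_trans; [apply Rabs_triang|].
  rewrite Rabs_mult, (Rabs_pos_eq (relu _)) by lra.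
  pose proof (Rabs_pos (kink k)).
  assert (Rabs (kink k) * relu (x - knot k) <= Rabs (kink k)) by nra. lra.
Qed.

Lemma interp_ge k x : (k <= n)%nat -> 0 <= x <= 1 ->
  - (Rabs (f (knot 0)) + kink_mass n) <= interp k x.
Proof.
  intros Hk Hx. pose proof (interp_abs_le k x Hx) as H. apply Rabs_le_inv in H.
  pose proof (kink_mass_le k n Hk). lra.
Qed.

Lemma knot_cell x : 0 <= x <= 1 -> exists j, (j < n)%nat /\ knot j <= x <= knot (S j).
Proof.
  intros Hx.
  assert (H : forall k, x <= knot (S k) ->
    exists j, (j <= k)%nat /\ knot j <= x <= knot (S j)).
  { induction k as [|k IH]; intros Hk.
    - exists O. rewrite knot_0. split; [lia | lra].
    - destruct (Rle_dec x (knot (S k))) as [Hle|Hgt].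
      + destruct (IH Hle) as [j [Hj Hjx]]. exists j; split; [lia | exact Hjx].
      + exists (S k); split; [lia | lra]. }
  destruct (H (pred n)) as [j [Hj Hjx]].
  - replace (S (pred n)) with n by lia. rewrite knot_n; lra.
  - exists j; split; [lia | exact Hjx].
Qed.

Lemma interp_approx eps :
  (forall x y, 0 <= x <= 1 -> 0 <= y <= 1 -> Rabs (x - y) <= / INR n ->
     Rabs (f x - f y) <= eps) ->
  forall x, 0 <= x <= 1 -> Rabs (f x - interp n x) <= eps.
Proof.
  intros Hf x Hx. destruct (knot_cell x Hx) as [j [Hj Hjx]].
  replace (interp n x) with (interp (S (pred n)) x) by (f_equal; lia).
  rewrite (proj1 (interp_S_on_cells (pred n) x ltac:(lra)) j ltac:(lia) Hjx).
  pose proof (knot_ge0 j). pose proof (knot_le (S j) n Hj). rewrite knot_n in *.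
  rewrite knot_S in *.
  replace (slope j * (x - knot j))
    with (INR n * (x - knot j) * (f (knot j + / INR n) - f (knot j)))
    by (unfold slope; rewrite knot_S; ring).
  pose proof (Rinv_0_lt_compat _ INR_n_gt0).
  apply Rabs_sub_convex.
  - split; [nra|]. rewrite <- (Rinv_r (INR n)) by lra. apply Rmult_le_compat_l; lra.
  - apply Hf; [lra | lra | apply Rabs_le; lra].
  - apply Hf; [lra | lra | apply Rabs_le; lra].
Qed.

End Interpolation.

(** * Networks of width three *)

Lemma relu_relu_sub r c : 0 <= c -> relu (relu r - c) = relu (r - c).
Proof.
  intros Hc. destruct (Rle_dec r 0).
  - rewrite (relu_eq0 r), !relu_eq0 by lra. reflexivity.
  - rewrite (relu_id r) by lra. reflexivity.
Qed.

Lemma sum_below_first3 w (g : nat -> R) : (3 <= w)%nat ->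
  (forall j, (3 <= j)%nat -> g j = 0) -> sum_below w g = g 0%nat + g 1%nat + g 2%nat.
Proof.
  intros Hw Hg. induction Hw as [|w Hw IH]; simpl; [ring|].
  rewrite IH, (Hg w) by lia. ring.
Qed.

Lemma eval_cons din d W b rest x : rest <> nil ->
  eval din ((d, W, b) :: rest) x = eval d rest (fun i => relu (affine din W b x i)).
Proof. intros H. destruct rest; [congruence | reflexivity]. Qed.

Lemma fold_max_const (l : list nat) w : l <> nil -> (forall a, In a l -> a = w) ->
  fold_right Nat.max O l = w.
Proof.
  induction l as [|a l IH]; intros Hne H; [congruence|]. simpl.
  rewrite (H a (or_introl eq_refl)).
  destruct l as [|b l]; [simpl; lia|].
  rewrite IH; [lia | congruence | intros c Hc; apply H; right; exact Hc].
Qed.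

Section WideNetwork.
Variables (w n : nat) (f1 f2 : R -> R).
Hypotheses (w_ge3 : (3 <= w)%nat) (n_pos : (1 <= n)%nat).

Definition mass_bound (f : R -> R) : R := Rabs (f (knot n 0)) + kink_mass n f n.

Definition offset : R := 1 + mass_bound f1 + mass_bound f2.

Lemma mass_bound_ge0 f : 0 <= mass_bound f.
Proof.
  unfold mass_bound. pose proof (Rabs_pos (f (knot n 0))).
  pose proof (kink_mass_le n f 0 n ltac:(lia)). simpl in *. lra.
Qed.

Lemma offset_add_interp_ge0 f k x : f = f1 \/ f = f2 -> (k <= n)%nat -> 0 <= x <= 1 ->
  0 <= offset + interp n f k x.
Proof.
  intros Hf Hk Hx. pose proof (interp_ge n f n_pos k x Hk Hx).
  pose proof (mass_bound_ge0 f1). pose proof (mass_bound_ge0 f2).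
  unfold offset, mass_bound in *. destruct Hf; subst; lra.
Qed.

(* Neuron 0 carries the current hinge [relu (x - knot n m)]; neurons 1 and 2 carry the
   partial interpolants of [f1] and [f2], shifted by [offset] so that the ReLU leaves them
   unchanged; all other neurons are 0. *)
Definition first_layer : layer :=
  (w, fun i _ => match i with O => 1 | _ => 0 end,
      fun i => match i with
               | 1%nat => offset + f1 (knot n 0) | 2%nat => offset + f2 (knot n 0)
               | _ => 0 end).

Definition hinge_layer (m : nat) : layer :=
  (w, fun i j => match i, j with
                 | O, O => 1
                 | 1%nat, O => kink n f1 m | 1%nat, 1%nat => 1
                 | 2%nat, O => kink n f2 m | 2%nat, 2%nat => 1
                 | _, _ => 0 end,
      fun i => match i with O => - / INR n | _ => 0 end).

Definition output_layer : layer :=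
  (2%nat, fun i j => match i, j with O, 1%nat => 1 | 1%nat, 2%nat => 1 | _, _ => 0 end,
      fun i => match i with O | 1%nat => - offset | _ => 0 end).

Definition wide_net : list layer :=
  first_layer :: map hinge_layer (seq 0 n) ++ output_layer :: nil.

Definition hidden_state (m : nat) (x : R) (h : vec) : Prop :=
  h O = relu (x - knot n m) /\ h 1%nat = offset + interp n f1 m x /\
  h 2%nat = offset + interp n f2 m x.

Lemma hinge_layers_eval x : 0 <= x <= 1 -> forall k m h, hidden_state m x h -> (m + k = n)%nat ->
  let y := eval w (map hinge_layer (seq m k) ++ output_layer :: nil) h in
  (y 0%nat, y 1%nat) = (interp n f1 n x, interp n f2 n x).
Proof.
  intros Hx k. induction k as [|k IH]; intros m h [H0 [H1 H2]] Hmk; cbv zeta.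
  - simpl. unfold affine.
    rewrite !sum_below_first3 by (auto; intros [|[|[|j]]] Hj; try lia; ring).
    rewrite H1, H2. replace m with n by lia. f_equal; ring.
  - cbn [seq map app]. set (rest := map hinge_layer (seq (S m) k) ++ output_layer :: nil).
    unfold hinge_layer at 1 2. rewrite eval_cons by (unfold rest; destruct k; simpl; congruence).
    apply IH; [|lia]. unfold hidden_state, affine.
    rewrite !sum_below_first3 by (auto; intros [|[|[|j]]] Hj; try lia; ring).
    rewrite H0, H1, H2. cbn [interp]. split; [|split].
    + rewrite knot_S by lia.
      replace (1 * relu (x - knot n m) + 0 * (offset + interp n f1 m x)
               + 0 * (offset + interp n f2 m x) + - / INR n)
        with (relu (x - knot n m) - / INR n) by ring.
      rewrite relu_relu_sub by (left; apply Rinv_0_lt_compat, lt_0_INR; lia).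
      f_equal; ring.
    + rewrite relu_id; [ring|].
      pose proof (offset_add_interp_ge0 f1 (S m) x (or_introl eq_refl) ltac:(lia) Hx) as Hpos.
      simpl in Hpos. lra.
    + rewrite relu_id; [ring|].
      pose proof (offset_add_interp_ge0 f2 (S m) x (or_intror eq_refl) ltac:(lia) Hx) as Hpos.
      simpl in Hpos. lra.
Qed.

Lemma wide_net_fun x : 0 <= x <= 1 -> net_fun wide_net x = (interp n f1 n x, interp n f2 n x).
Proof.
  intros Hx. unfold net_fun, wide_net, first_layer.
  rewrite eval_cons by (destruct n; simpl; congruence).
  apply (hinge_layers_eval x Hx n 0); [|reflexivity].
  pose proof (offset_add_interp_ge0 f1 0 x (or_introl eq_refl) ltac:(lia) Hx).
  pose proof (offset_add_interp_ge0 f2 0 x (or_intror eq_refl) ltac:(lia) Hx).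
  unfold hidden_state, affine. cbn in *. rewrite (knot_0 n) in * by lia.
  split; [f_equal; ring | split; rewrite relu_id; lra].
Qed.

Lemma wide_net_arch : net_1_2 wide_net /\ width wide_net = w.
Proof.
  unfold net_1_2, width, hidden_dims, wide_net. rewrite app_comm_cons.
  split; [split; [apply not_eq_sym, app_cons_not_nil | rewrite last_last; reflexivity]|].
  rewrite removelast_last. apply fold_max_const; [simpl; congruence|].
  intros a Ha. simpl in Ha. destruct Ha as [<-|Ha]; [reflexivity|].
  rewrite map_map in Ha. apply in_map_iff in Ha. destruct Ha as [m [<- _]]. reflexivity.
Qed.

End WideNetwork.

Theorem dense_width_of_ge3 w : (3 <= w)%nat -> dense_width w.
Proof.
  intros Hw g Hg eps Heps.
  destruct (continuous_on01_uniform g Hg eps Heps) as [d [Hd Hunif]].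
  destruct (exists_inv_nat_lt d Hd) as [n [Hn Hnd]].
  set (f1 := fun x => fst (g x)). set (f2 := fun x => snd (g x)).
  assert (Hcoord : forall (p : R * R -> R), (forall u, Rabs (p u) <= norm_inf u) ->
      (forall u v, p (vsub u v) = p u - p v) ->
      forall x, in01 x -> Rabs (p (g x) - interp n (fun y => p (g y)) n x) <= eps).
  { intros p Hp Hsub. apply interp_approx; [exact Hn|].
    intros x y Hx Hy Hxy. rewrite <- Hsub. eapply Rle_trans; [apply Hp|].
    apply Hunif; [exact Hx | exact Hy | lra]. }
  destruct (wide_net_arch w n f1 f2) as [Harch Hwidth].
  exists (wide_net w n f1 f2). split; [exact Harch | split; [exact Hwidth|]].
  intros x Hx. rewrite wide_net_fun by assumption.
  apply norm_inf_lub; [apply (Hcoord fst) | apply (Hcoord snd)]; auto using norm_inf_fst, norm_inf_snd.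
Qed.

(** * Planar ReLU chains *)

Record mat := Mat { m00 : R; m01 : R; m10 : R; m11 : R }.

Definition mapp (M : mat) (u : R * R) : R * R :=
  (m00 M * fst u + m01 M * snd u, m10 M * fst u + m11 M * snd u).
Definition msum (M : mat) : R :=
  Rabs (m00 M) + Rabs (m01 M) + Rabs (m10 M) + Rabs (m11 M).
Definition mdet (M : mat) : R := m00 M * m11 M - m01 M * m10 M.
Definition mdiff (M M' : mat) : mat :=
  Mat (m00 M - m00 M') (m01 M - m01 M') (m10 M - m10 M') (m11 M - m11 M').
Definition mshift (M : mat) (d : R) : mat := Mat (m00 M + d) (m01 M) (m10 M) (m11 M + d).

Lemma msum_ge0 M : 0 <= msum M.
Proof.
  unfold msum; pose proof (Rabs_pos (m00 M)); pose proof (Rabs_pos (m01 M));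
  pose proof (Rabs_pos (m10 M)); pose proof (Rabs_pos (m11 M)); lra.
Qed.

Lemma Rabs_lin2_le a b x y c : Rabs x <= c -> Rabs y <= c ->
  Rabs (a * x + b * y) <= (Rabs a + Rabs b) * c.
Proof.
  intros Hx Hy. eapply Rle_trans; [apply Rabs_triang|]. rewrite !Rabs_mult.
  pose proof (Rabs_pos a); pose proof (Rabs_pos b).
  assert (Rabs a * Rabs x <= Rabs a * c) by (apply Rmult_le_compat_l; auto).
  assert (Rabs b * Rabs y <= Rabs b * c) by (apply Rmult_le_compat_l; auto). lra.
Qed.

Lemma mapp_norm_le M u : norm_inf (mapp M u) <= msum M * norm_inf u.
Proof.
  pose proof (norm_inf_fst u); pose proof (norm_inf_snd u); pose proof (norm_inf_ge0 u).
  pose proof (Rabs_pos (m00 M)); pose proof (Rabs_pos (m01 M));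
  pose proof (Rabs_pos (m10 M)); pose proof (Rabs_pos (m11 M)).
  apply norm_inf_lub; simpl; (eapply Rle_trans; [apply Rabs_lin2_le; eauto|]); unfold msum; nra.
Qed.

(* Cramer's rule: [mdet M * u] is the adjugate of [M] applied to [mapp M u]. *)
Lemma mdet_norm_le M u : Rabs (mdet M) * norm_inf u <= msum M * norm_inf (mapp M u).
Proof.
  set (X := fst (mapp M u)). set (Y := snd (mapp M u)).
  pose proof (norm_inf_fst (mapp M u)) as HX. pose proof (norm_inf_snd (mapp M u)) as HY.
  fold X in HX. fold Y in HY.
  pose proof (Rabs_pos (m00 M)); pose proof (Rabs_pos (m01 M));
  pose proof (Rabs_pos (m10 M)); pose proof (Rabs_pos (m11 M)).
  pose proof (norm_inf_ge0 (mapp M u)).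
  assert (E1 : mdet M * fst u = m11 M * X + (- m01 M) * Y)
    by (unfold X, Y, mdet, mapp; simpl; ring).
  assert (E2 : mdet M * snd u = (- m10 M) * X + m00 M * Y)
    by (unfold X, Y, mdet, mapp; simpl; ring).
  unfold norm_inf at 1. rewrite <- RmaxRmult by apply Rabs_pos.
  apply Rmax_lub; rewrite <- Rabs_mult; [rewrite E1 | rewrite E2];
  (eapply Rle_trans; [apply Rabs_lin2_le; eauto|]); rewrite Rabs_Ropp; unfold msum; nra.
Qed.

Lemma msum_gt0 M : mdet M <> 0 -> 0 < msum M.
Proof.
  intros H. pose proof (msum_ge0 M). destruct (Req_dec (msum M) 0) as [E|E]; [|lra].
  exfalso. apply H. unfold msum in E.
  pose proof (Rabs_pos (m00 M)); pose proof (Rabs_pos (m01 M));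
  pose proof (Rabs_pos (m10 M)); pose proof (Rabs_pos (m11 M)).
  assert (Z1 : m00 M = 0)
    by (destruct (Req_dec (m00 M) 0) as [|Hz]; [assumption | apply Rabs_pos_lt in Hz; lra]).
  assert (Z2 : m01 M = 0)
    by (destruct (Req_dec (m01 M) 0) as [|Hz]; [assumption | apply Rabs_pos_lt in Hz; lra]).
  unfold mdet. rewrite Z1, Z2. ring.
Qed.

(* [mdet (mshift M d)] is a monic quadratic in [d], so it cannot vanish at three points. *)
Lemma mdet_shift_neq0 M th : 0 < th -> exists d, 0 < d <= th /\ mdet (mshift M d) <> 0.
Proof.
  intros Hth. unfold mdet, mshift; simpl.
  set (p := m00 M); set (q := m01 M); set (r := m10 M); set (s := m11 M).
  destruct (Req_dec ((p + th) * (s + th) - q * r) 0) as [E1|E1];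
    [|exists th; split; [lra | exact E1]].
  destruct (Req_dec ((p + th / 2) * (s + th / 2) - q * r) 0) as [E2|E2];
    [|exists (th / 2); split; [lra | exact E2]].
  destruct (Req_dec ((p + th / 3) * (s + th / 3) - q * r) 0) as [E3|E3];
    [|exists (th / 3); split; [lra | exact E3]].
  exfalso.
  assert (A : th * (3 / 4 * th + (p + s) / 2) = 0) by lra.
  assert (B : th * (8 / 9 * th + (p + s) * 2 / 3) = 0) by lra.
  apply Rmult_integral in A. apply Rmult_integral in B. lra.
Qed.

Definition leaky (a r : R) : R := Rmax r (a * r).
Definition leaky2 (a : R) (u : R * R) : R * R := (leaky a (fst u), leaky a (snd u)).

Lemma leaky_0 r : leaky 0 r = relu r.
Proof. unfold leaky, relu. rewrite Rmult_0_l. reflexivity. Qed.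

Lemma leaky_lipschitz a r s : 0 <= a <= 1 -> Rabs (leaky a r - leaky a s) <= Rabs (r - s).
Proof.
  intros Ha. unfold leaky, Rmax. destruct (Rle_dec r (a * r)), (Rle_dec s (a * s));
  unfold Rabs; repeat destruct Rcase_abs; nra.
Qed.

Lemma leaky_expansive a r s : 0 <= a <= 1 -> a * Rabs (r - s) <= Rabs (leaky a r - leaky a s).
Proof.
  intros Ha. unfold leaky, Rmax. destruct (Rle_dec r (a * r)), (Rle_dec s (a * s));
  unfold Rabs; repeat destruct Rcase_abs; nra.
Qed.

Lemma leaky_abs_le a s : 0 <= a <= 1 -> Rabs (leaky a s) <= Rabs s.
Proof.
  intros Ha. unfold leaky, Rmax. destruct (Rle_dec s (a * s));
  unfold Rabs; repeat destruct Rcase_abs; nra.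
Qed.

Lemma leaky_0_sub a r s : 0 <= a <= 1 ->
  Rabs (leaky 0 r - leaky a s) <= Rabs (r - s) + a * Rabs s.
Proof.
  intros Ha. unfold leaky, Rmax. rewrite !Rmult_0_l.
  destruct (Rle_dec r 0), (Rle_dec s (a * s)); unfold Rabs; repeat destruct Rcase_abs; nra.
Qed.

Lemma leaky2_norm_le a u : 0 <= a <= 1 -> norm_inf (leaky2 a u) <= norm_inf u.
Proof.
  intros Ha. apply norm_inf_lub; simpl; (eapply Rle_trans; [apply leaky_abs_le; auto|]);
  [apply norm_inf_fst | apply norm_inf_snd].
Qed.

Lemma leaky2_lipschitz a u v : 0 <= a <= 1 ->
  norm_inf (vsub (leaky2 a u) (leaky2 a v)) <= norm_inf (vsub u v).
Proof.
  intros Ha. apply norm_inf_lub; simpl; (eapply Rle_trans; [apply leaky_lipschitz; auto|]);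
  [apply (norm_inf_fst (vsub u v)) | apply (norm_inf_snd (vsub u v))].
Qed.

Lemma leaky2_expansive a u v : 0 <= a <= 1 ->
  a * norm_inf (vsub u v) <= norm_inf (vsub (leaky2 a u) (leaky2 a v)).
Proof.
  intros Ha. unfold norm_inf at 1. rewrite <- RmaxRmult by lra.
  apply Rmax_lub; simpl; (eapply Rle_trans; [apply leaky_expansive; auto|]);
  [apply (norm_inf_fst (vsub (leaky2 a u) (leaky2 a v)))
  |apply (norm_inf_snd (vsub (leaky2 a u) (leaky2 a v)))].
Qed.

Lemma leaky2_0_sub a u v : 0 <= a <= 1 ->
  norm_inf (vsub (leaky2 0 u) (leaky2 a v)) <= norm_inf (vsub u v) + a * norm_inf v.
Proof.
  intros Ha. pose proof (norm_inf_fst (vsub u v)); pose proof (norm_inf_snd (vsub u v));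
  pose proof (norm_inf_fst v); pose proof (norm_inf_snd v).
  apply norm_inf_lub; simpl; (eapply Rle_trans; [apply leaky_0_sub; auto|]); simpl in *; nra.
Qed.

Definition affine2 := (mat * (R * R))%type.

(* [chain 0 Ms] is the ReLU network with the planar affine layers [Ms]; for [a > 0] the
   ReLU is replaced by the leaky ReLU of slope [a]. *)
Definition step (a : R) (Mb : affine2) (u : R * R) : R * R :=
  vadd (mapp (fst Mb) (leaky2 a u)) (snd Mb).
Fixpoint chain (a : R) (Ms : list affine2) (u : R * R) : R * R :=
  match Ms with nil => u | Mb :: Ms' => chain a Ms' (step a Mb u) end.

Definition layer_close (th : R) (Mb Mb' : affine2) : Prop :=
  msum (mdiff (fst Mb) (fst Mb')) <= th /\ norm_inf (vsub (snd Mb) (snd Mb')) <= th.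

Lemma layer_close_le th th' Mb Mb' : th <= th' -> layer_close th Mb Mb' -> layer_close th' Mb Mb'.
Proof. unfold layer_close; intros; lra. Qed.

Lemma step_norm_le Mb u R0 : norm_inf u <= R0 ->
  norm_inf (step 0 Mb u) <= msum (fst Mb) * R0 + norm_inf (snd Mb).
Proof.
  intros Hu. unfold step. eapply Rle_trans; [apply norm_inf_add|].
  pose proof (mapp_norm_le (fst Mb) (leaky2 0 u)). pose proof (leaky2_norm_le 0 u ltac:(lra)).
  pose proof (msum_ge0 (fst Mb)).
  assert (msum (fst Mb) * norm_inf (leaky2 0 u) <= msum (fst Mb) * R0)
    by (apply Rmult_le_compat_l; lra).
  lra.
Qed.

Lemma step_close a th Mb Mb' u v R0 : 0 <= a <= th -> layer_close th Mb Mb' ->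
  norm_inf u <= R0 -> norm_inf (vsub u v) <= th -> th <= 1 ->
  norm_inf (vsub (step 0 Mb u) (step a Mb' v)) <= th * (msum (fst Mb) * (R0 + 2) + R0 + 2).
Proof.
  intros Ha [HM Hb] Hu Huv Hth. destruct Mb as [M b], Mb' as [M' b']. simpl in *.
  set (w0 := leaky2 0 u). set (wa := leaky2 a v).
  replace (vsub (step 0 (M, b) u) (step a (M', b') v))
    with (vadd (vadd (mapp M (vsub w0 wa)) (mapp (mdiff M M') wa)) (vsub b b'))
    by (unfold step, vsub, vadd, mapp, mdiff; simpl; f_equal; ring).
  assert (Hv : norm_inf v <= R0 + 1).
  { replace v with (vsub u (vsub u v)) by (unfold vsub; destruct u, v; simpl; f_equal; ring).
    pose proof (norm_inf_sub u (vsub u v)). lra. }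
  assert (Hwa : norm_inf wa <= R0 + 1).
  { eapply Rle_trans; [apply leaky2_norm_le | exact Hv]. lra. }
  assert (Hw : norm_inf (vsub w0 wa) <= th * (R0 + 2)).
  { eapply Rle_trans; [apply leaky2_0_sub; lra|]. pose proof (norm_inf_ge0 v). nra. }
  pose proof (mapp_norm_le M (vsub w0 wa)). pose proof (mapp_norm_le (mdiff M M') wa).
  pose proof (msum_ge0 M). pose proof (msum_ge0 (mdiff M M')). pose proof (norm_inf_ge0 wa).
  eapply Rle_trans; [apply norm_inf_add|].
  eapply Rle_trans; [apply Rplus_le_compat_r, norm_inf_add|].
  assert (msum M * norm_inf (vsub w0 wa) <= msum M * (th * (R0 + 2)))
    by (apply Rmult_le_compat_l; lra).
  assert (msum (mdiff M M') * norm_inf wa <= th * (R0 + 1)) by nra.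
  lra.
Qed.

Lemma chain_approx Ms : forall R0 eta, 0 <= R0 -> 0 < eta -> exists th, 0 < th <= 1 /\
  forall a Ms' u v, 0 <= a <= th -> Forall2 (layer_close th) Ms Ms' ->
  norm_inf u <= R0 -> norm_inf (vsub u v) <= th ->
  norm_inf (vsub (chain 0 Ms u) (chain a Ms' v)) <= eta.
Proof.
  induction Ms as [|Mb Ms IH]; intros R0 eta HR0 Heta.
  - exists (Rmin 1 eta). split; [split; [apply Rmin_pos | apply Rmin_l]; lra|].
    intros a Ms' u v Ha HF Hu Huv. inversion HF; subst. simpl.
    pose proof (Rmin_r 1 eta). lra.
  - pose proof (msum_ge0 (fst Mb)). pose proof (norm_inf_ge0 (snd Mb)).
    destruct (IH (msum (fst Mb) * R0 + norm_inf (snd Mb)) eta ltac:(nra) Heta)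
      as [th' [Hth' IH']].
    set (K := msum (fst Mb) * (R0 + 2) + R0 + 2).
    assert (HK : 1 <= K) by (unfold K; nra).
    exists (th' / K).
    assert (Hth : 0 < th' / K <= th').
    { split; [apply Rdiv_lt_0_compat; lra|].
      apply (Rmult_le_reg_r K); [lra|]. unfold Rdiv. rewrite Rmult_assoc, Rinv_l by lra. nra. }
    split; [lra|].
    intros a Ms' u v Ha HF Hu Huv. inversion HF as [|Mb0 Mb' Ms0 Ms'' Hc HF']; subst.
    simpl. apply IH'.
    + lra.
    + eapply Forall2_impl; [|exact HF']. intros; eapply layer_close_le; eauto; lra.
    + apply step_norm_le; exact Hu.
    + eapply Rle_trans; [eapply step_close; eauto; lra|].
      fold K. unfold Rdiv. rewrite Rmult_assoc, Rinv_l by lra. lra.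
Qed.

Definition regular (Mb : affine2) : Prop := mdet (fst Mb) <> 0.

Lemma regular_layers_near Ms th : 0 < th ->
  exists Ms', Forall2 (layer_close th) Ms Ms' /\ Forall regular Ms'.
Proof.
  intros Hth. induction Ms as [|[M b] Ms [Ms' [Hclose Hreg]]].
  - exists nil; split; constructor.
  - destruct (mdet_shift_neq0 M (th / 2) ltac:(lra)) as [d [Hd Hdet]].
    exists ((mshift M d, b) :: Ms'). split; constructor; auto.
    unfold layer_close, msum, mdiff, mshift, vsub; simpl.
    replace (m00 M - (m00 M + d)) with (- d) by ring.
    replace (m11 M - (m11 M + d)) with (- d) by ring.
    rewrite !Rminus_diag, Rabs_R0, Rabs_Ropp, Rabs_pos_eq by lra.
    unfold norm_inf; simpl. rewrite Rabs_R0, Rmax_left; lra.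
Qed.

Lemma step_bilipschitz a Mb u v : 0 <= a <= 1 -> regular Mb ->
  Rabs (mdet (fst Mb)) / msum (fst Mb) * a * norm_inf (vsub u v)
    <= norm_inf (vsub (step a Mb u) (step a Mb v))
    <= msum (fst Mb) * norm_inf (vsub u v).
Proof.
  intros Ha Hreg. destruct Mb as [M b]. unfold regular in Hreg; simpl in *.
  pose proof (msum_gt0 M Hreg) as HS. pose proof (Rabs_pos (mdet M)).
  set (d := vsub (leaky2 a u) (leaky2 a v)).
  replace (vsub (step a (M, b) u) (step a (M, b) v)) with (mapp M d)
    by (unfold d, step, vsub, vadd, mapp; simpl; f_equal; ring).
  pose proof (mdet_norm_le M d). pose proof (mapp_norm_le M d).
  pose proof (leaky2_expansive a u v Ha). pose proof (leaky2_lipschitz a u v Ha).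
  fold d in H2, H3. pose proof (norm_inf_ge0 (vsub u v)).
  split.
  - apply (Rmult_le_reg_l (msum M)); [lra|].
    replace (msum M * (Rabs (mdet M) / msum M * a * norm_inf (vsub u v)))
      with (Rabs (mdet M) * (a * norm_inf (vsub u v))) by (field; lra).
    eapply Rle_trans; [|exact H0]. apply Rmult_le_compat_l; lra.
  - eapply Rle_trans; [exact H1|]. apply Rmult_le_compat_l; lra.
Qed.

Lemma chain_bilipschitz a Ms : 0 < a <= 1 -> Forall regular Ms -> exists k L, 0 < k /\ 0 <= L /\
  forall u v, k * norm_inf (vsub u v) <= norm_inf (vsub (chain a Ms u) (chain a Ms v))
              <= L * norm_inf (vsub u v).
Proof.
  intros Ha HF. induction HF as [|Mb Ms Hreg HF [k [L [Hk [HL IH]]]]].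
  - exists 1, 1. split; [lra|]. split; [lra|]. intros; simpl; lra.
  - pose proof (msum_gt0 _ Hreg) as HS. pose proof (Rabs_pos_lt _ Hreg) as HD.
    exists (k * (Rabs (mdet (fst Mb)) / msum (fst Mb) * a)), (L * msum (fst Mb)).
    split; [apply Rmult_lt_0_compat; [lra|]; apply Rmult_lt_0_compat; [|lra];
            apply Rdiv_lt_0_compat; lra|].
    split; [apply Rmult_le_pos; lra|].
    intros u v. simpl. destruct (IH (step a Mb u) (step a Mb v)) as [I1 I2].
    destruct (step_bilipschitz a Mb u v ltac:(lra) Hreg) as [S1 S2].
    split.
    + eapply Rle_trans; [|exact I1]. rewrite Rmult_assoc. apply Rmult_le_compat_l; lra.
    + eapply Rle_trans; [exact I2|]. rewrite Rmult_assoc. apply Rmult_le_compat_l; lra.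
Qed.

(** * Networks of width two as planar chains *)

Definition pad_weight (din : nat) (W : nat -> nat -> R) (i j : nat) : R :=
  if Nat.ltb j din then W i j else 0.

(* Columns [j >= din] are zeroed, so the coordinates of the previous layer beyond its width,
   which [affine din] never reads, do not contribute. *)
Definition planar_layer (din : nat) (W : nat -> nat -> R) (b : vec) : affine2 :=
  (Mat (pad_weight din W 0 0) (pad_weight din W 0 1) (pad_weight din W 1 0) (pad_weight din W 1 1),
   (b 0%nat, b 1%nat)).

Fixpoint planar_layers (din : nat) (ls : list layer) : list affine2 :=
  match ls with
  | nil => nil
  | (d, W, b) :: rest => planar_layer din W b :: planar_layers d rest
  end.

Lemma sum_below_le2 din W i (y : vec) : (din <= 2)%nat ->
  sum_below din (fun j => W i j * y j) = pad_weight din W i 0 * y 0%nat + pad_weight din W i 1 * y 1%nat.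
Proof. intros H. unfold pad_weight. destruct din as [|[|[|din]]]; try lia; simpl; ring. Qed.

Lemma step_planar_layer din W b (u : vec) : (din <= 2)%nat ->
  step 0 (planar_layer din W b) (u 0%nat, u 1%nat) =
  (affine din W b (fun i => relu (u i)) 0%nat, affine din W b (fun i => relu (u i)) 1%nat).
Proof.
  intros H. unfold step, planar_layer, affine, vadd, mapp, leaky2; simpl.
  rewrite !sum_below_le2 by exact H. rewrite !leaky_0. reflexivity.
Qed.

Lemma removelast_cons {A} (a : A) l : l <> nil -> removelast (a :: l) = a :: removelast l.
Proof. destruct l; [congruence | reflexivity]. Qed.

Lemma eval_relu_chain rest : forall din (u : vec), rest <> nil -> (din <= 2)%nat ->
  Forall (fun l => (layer_dim l <= 2)%nat) (removelast rest) ->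
  (eval din rest (fun i => relu (u i)) 0%nat, eval din rest (fun i => relu (u i)) 1%nat)
    = chain 0 (planar_layers din rest) (u 0%nat, u 1%nat).
Proof.
  induction rest as [|[[d W] b] rest IH]; intros din u Hne Hd Hdims; [congruence|].
  destruct rest as [|l2 rest'].
  - simpl. rewrite step_planar_layer by exact Hd. reflexivity.
  - rewrite eval_cons by congruence. cbn [planar_layers chain].
    rewrite removelast_cons in Hdims by congruence. inversion Hdims as [|? ? Hd' Hdims']; subst.
    rewrite step_planar_layer by exact Hd.
    apply IH; [congruence | exact Hd' | exact Hdims'].
Qed.

Lemma hidden_dim_le_width ls a : In a (hidden_dims ls) -> (a <= width ls)%nat.
Proof.
  unfold width. induction (hidden_dims ls) as [|x l IH]; simpl; [tauto|].
  intros [->|H]; [lia|]. specialize (IH H); lia.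
Qed.

Definition line (c e : R * R) (x : R) : R * R := vadd (vscal x c) e.

Lemma net_fun_chain ls : net_1_2 ls -> (width ls <= 2)%nat ->
  exists c e Ms, forall x, net_fun ls x = chain 0 Ms (line c e x).
Proof.
  intros [Hne _] Hw. destruct ls as [|[[d1 W1] b1] rest]; [congruence|].
  exists (W1 0%nat 0%nat, W1 1%nat 0%nat), (b1 0%nat, b1 1%nat).
  assert (Hdims : Forall (fun l => (layer_dim l <= 2)%nat) (removelast ((d1, W1, b1) :: rest))).
  { apply Forall_forall. intros l Hl.
    apply (Nat.le_trans _ (width ((d1, W1, b1) :: rest))); [|exact Hw].
    apply hidden_dim_le_width, in_map, Hl. }
  destruct rest as [|l2 rest'].
  - exists nil. intros x. unfold net_fun, line, vadd, vscal. simpl. unfold affine. simpl.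
    f_equal; ring.
  - exists (planar_layers d1 (l2 :: rest')). intros x. unfold net_fun.
    rewrite removelast_cons in Hdims by congruence. inversion Hdims as [|? ? Hd1 Hdims']; subst.
    rewrite eval_cons by congruence.
    rewrite (eval_relu_chain (l2 :: rest') d1 (affine 1 W1 b1 (fun _ => x)));
      [|congruence | exact Hd1 | exact Hdims'].
    unfold affine, line, vadd, vscal; simpl. f_equal; f_equal; ring.
Qed.

Lemma line_sub_line c e x y : vsub (line c e x) (line c e y) = vscal (x - y) c.
Proof. unfold line, vsub, vadd, vscal; simpl. f_equal; ring. Qed.

Lemma line_sub_dir c c' e x : vsub (line c e x) (line c' e x) = vscal x (vsub c c').
Proof. unfold line, vsub, vadd, vscal; simpl. f_equal; ring. Qed.

Lemma line_norm_le c e x : in01 x -> norm_inf (line c e x) <= norm_inf c + norm_inf e.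
Proof.
  intros Hx. unfold line. eapply Rle_trans; [apply norm_inf_add|].
  rewrite norm_inf_scal, Rabs_pos_eq by (unfold in01 in Hx; lra).
  pose proof (norm_inf_ge0 c). unfold in01 in Hx. nra.
Qed.

Lemma exists_nonzero_near c th : 0 < th ->
  exists c', 0 < norm_inf c' /\ norm_inf (vsub c c') <= th.
Proof.
  intros Hth. destruct (Rlt_dec 0 (norm_inf c)) as [Hc|Hc].
  - exists c. split; [exact Hc|].
    unfold norm_inf, vsub; simpl. rewrite !Rminus_diag, Rabs_R0, Rmax_left; lra.
  - assert (Hthth : norm_inf (th, th) = th).
    { unfold norm_inf; simpl. rewrite Rabs_pos_eq, Rmax_left; lra. }
    exists (th, th). split; [lra|].
    pose proof (norm_inf_sub c (th, th)). pose proof (norm_inf_ge0 c). lra.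
Qed.

Definition bilipschitz01 (g : R -> R * R) : Prop :=
  exists k L, 0 < k /\ 0 <= L /\ forall x y, in01 x -> in01 y ->
    k * Rabs (x - y) <= norm_inf (vsub (g x) (g y)) <= L * Rabs (x - y).

(* Leaky ReLUs and invertible layers make the chain bi-Lipschitz, and both changes are
   uniformly small perturbations on the bounded set swept by the line. *)
Lemma chain_line_bilipschitz_approx Ms c e eta : 0 < eta ->
  exists g, bilipschitz01 g /\
    forall x, in01 x -> norm_inf (vsub (chain 0 Ms (line c e x)) (g x)) <= eta.
Proof.
  intros Heta. pose proof (norm_inf_ge0 c). pose proof (norm_inf_ge0 e).
  destruct (chain_approx Ms (norm_inf c + norm_inf e) eta ltac:(lra) Heta)
    as [th [Hth Happrox]].
  destruct (regular_layers_near Ms th ltac:(lra)) as [Ms' [Hclose Hreg]].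
  destruct (exists_nonzero_near c th ltac:(lra)) as [c' [Hc' Hcc']].
  destruct (chain_bilipschitz th Ms' Hth Hreg) as [k [L [Hk [HL Hbl]]]].
  exists (fun x => chain th Ms' (line c' e x)). split.
  - exists (k * norm_inf c'), (L * norm_inf c').
    split; [nra|]. split; [nra|]. intros x y _ _.
    destruct (Hbl (line c' e x) (line c' e y)) as [B1 B2].
    rewrite line_sub_line, norm_inf_scal in B1, B2.
    split; lra.
  - intros x Hx. apply Happrox; [lra | exact Hclose | apply line_norm_le, Hx |].
    rewrite line_sub_dir, norm_inf_scal, Rabs_pos_eq by (unfold in01 in Hx; lra).
    pose proof (norm_inf_ge0 (vsub c c')). unfold in01 in Hx. nra.
Qed.

Lemma narrow_net_bilipschitz_approx ls eta : net_1_2 ls -> (width ls <= 2)%nat -> 0 < eta ->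
  exists g, bilipschitz01 g /\ forall x, in01 x -> norm_inf (vsub (net_fun ls x) (g x)) <= eta.
Proof.
  intros Hls Hw Heta. destruct (net_fun_chain ls Hls Hw) as [c [e [Ms Hnet]]].
  destruct (chain_line_bilipschitz_approx Ms c e eta Heta) as [g [Hg Happrox]].
  exists g. split; [exact Hg|]. intros x Hx. rewrite Hnet. exact (Happrox x Hx).
Qed.

(** * A discrete Poincare-Miranda theorem *)

Inductive quadrant := Q0 | Q1 | Q2 | Q3.

(* The boundary rays are distributed so that the quadrants partition the plane; the origin
   lands in [Q3]. *)
Definition quadrant_of (u : R * R) : quadrant :=
  if Rlt_dec 0 (fst u) then (if Rle_dec 0 (snd u) then Q0 else Q3)
  else if Rlt_dec 0 (snd u) then Q1 else if Rlt_dec (fst u) 0 then Q2 else Q3.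

Definition qsucc (a : quadrant) : quadrant :=
  match a with Q0 => Q1 | Q1 => Q2 | Q2 => Q3 | Q3 => Q0 end.

Definition opposite (a b : quadrant) : bool :=
  match a, b with Q0, Q2 | Q2, Q0 | Q1, Q3 | Q3, Q1 => true | _, _ => false end.

(* The signed quarter turn from [a] to [b]; it is ambiguous for opposite quadrants and set
   to 0 there. *)
Definition turn (a b : quadrant) : Z :=
  match a, b with
  | Q0, Q1 | Q1, Q2 | Q2, Q3 | Q3, Q0 => 1%Z
  | Q1, Q0 | Q2, Q1 | Q3, Q2 | Q0, Q3 => (-1)%Z
  | _, _ => 0%Z
  end.

Lemma quadrant_of_fst_neg u : fst u < 0 -> quadrant_of u = Q1 \/ quadrant_of u = Q2.
Proof. unfold quadrant_of; repeat destruct Rlt_dec; repeat destruct Rle_dec; auto; lra. Qed.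

Lemma quadrant_of_fst_pos u : 0 < fst u -> quadrant_of u = Q3 \/ quadrant_of u = Q0.
Proof. unfold quadrant_of; repeat destruct Rlt_dec; repeat destruct Rle_dec; auto; lra. Qed.

Lemma quadrant_of_snd_pos u : 0 < snd u -> quadrant_of u = Q0 \/ quadrant_of u = Q1.
Proof. unfold quadrant_of; repeat destruct Rlt_dec; repeat destruct Rle_dec; auto; lra. Qed.

Lemma quadrant_of_snd_neg u : snd u < 0 -> quadrant_of u = Q2 \/ quadrant_of u = Q3.
Proof. unfold quadrant_of; repeat destruct Rlt_dec; repeat destruct Rle_dec; auto; lra. Qed.

Lemma opposite_quadrant_of u v : opposite (quadrant_of u) (quadrant_of v) = true ->
  fst u * fst v <= 0 /\ snd u * snd v <= 0.
Proof.
  unfold quadrant_of; repeat destruct Rlt_dec; repeat destruct Rle_dec;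
  simpl; try discriminate; intros _; split; nra.
Qed.

Lemma Rabs_le_sub_of_mul_nonpos a b : a * b <= 0 -> Rabs a <= Rabs (a - b).
Proof. intros H. unfold Rabs; repeat destruct Rcase_abs; nra. Qed.

Lemma quadrant_of_not_opposite m u v : norm_inf (vsub u v) < m -> m <= norm_inf u ->
  opposite (quadrant_of u) (quadrant_of v) = false.
Proof.
  intros Huv Hu. destruct (opposite _ _) eqn:E; [exfalso | reflexivity].
  destruct (opposite_quadrant_of u v E) as [H1 H2].
  apply Rabs_le_sub_of_mul_nonpos in H1, H2.
  pose proof (norm_inf_fst (vsub u v)). pose proof (norm_inf_snd (vsub u v)).
  assert (norm_inf u < m) by (apply Rmax_lub_lt; simpl in *; lra). lra.
Qed.

Lemma turn_cocycle a b c e :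
  opposite a b = false -> opposite b c = false -> opposite a e = false ->
  opposite e c = false -> opposite a c = false -> opposite b e = false ->
  (turn a b + turn b c = turn a e + turn e c)%Z.
Proof. destruct a, b, c, e; simpl; intros; try discriminate; reflexivity. Qed.

Lemma turn_half_plane a b c : b = a \/ b = qsucc a -> c = a \/ c = qsucc a ->
  turn b c = (turn a c - turn a b)%Z.
Proof. intros [-> | ->] [-> | ->]; destruct a; reflexivity. Qed.

Fixpoint zsum (n : nat) (f : nat -> Z) : Z :=
  match n with O => 0%Z | S k => (zsum k f + f k)%Z end.

Lemma zsum_ext n f g : (forall i, (i < n)%nat -> f i = g i) -> zsum n f = zsum n g.
Proof.
  induction n; simpl; intros H; [reflexivity|].
  rewrite IHn by (intros; apply H; lia). rewrite H by lia. reflexivity.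
Qed.

Lemma zsum_add n f g : zsum n (fun i => (f i + g i)%Z) = (zsum n f + zsum n g)%Z.
Proof. induction n; simpl; [reflexivity|]. rewrite IHn. ring. Qed.

Lemma zsum_shift n f : zsum n (fun i => f (S i)) = (zsum n f - f O + f n)%Z.
Proof. induction n; simpl; [ring|]. rewrite IHn. ring. Qed.

Lemma zsum_telescope n f (phi : nat -> Z) :
  (forall i, (i < n)%nat -> f i = (phi (S i) - phi i)%Z) -> zsum n f = (phi n - phi O)%Z.
Proof.
  induction n; simpl; intros H; [ring|].
  rewrite IHn by (intros; apply H; lia). rewrite H by lia. ring.
Qed.

Lemma zsum_turn_half_plane n (f : nat -> quadrant) a :
  (forall i, (i <= n)%nat -> f i = a \/ f i = qsucc a) ->
  zsum n (fun i => turn (f i) (f (S i))) = (turn a (f n) - turn a (f O))%Z.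
Proof.
  intros H. apply (zsum_telescope n _ (fun i => turn a (f i))).
  intros i Hi. apply turn_half_plane; apply H; lia.
Qed.

(* The total turning along the bottom row of the grid differs from that along the top row by
   the turning along the two sides; the boundary conditions make these counts incompatible. *)
Lemma discrete_poincare_miranda N (Q : nat -> nat -> quadrant) :
  (forall i j i' j', (i <= N)%nat -> (j <= N)%nat -> (i' <= N)%nat -> (j' <= N)%nat ->
     adjacent i i' -> adjacent j j' -> opposite (Q i j) (Q i' j') = false) ->
  (forall j, (j <= N)%nat -> Q O j = Q1 \/ Q O j = Q2) ->
  (forall j, (j <= N)%nat -> Q N j = Q3 \/ Q N j = Q0) ->
  (forall i, (i <= N)%nat -> Q i O = Q0 \/ Q i O = Q1) ->
  (forall i, (i <= N)%nat -> Q i N = Q2 \/ Q i N = Q3) ->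
  False.
Proof.
  intros Hadj HL HR HB HT.
  set (H i j := turn (Q i j) (Q (S i) j)).
  set (V i j := turn (Q i j) (Q i (S j))).
  set (T j := zsum N (fun i => H i j)).
  assert (Hrow : forall j, (j < N)%nat -> T (S j) = (T j + V N j - V O j)%Z).
  { intros j Hj.
    assert (E : zsum N (fun i => (H i j + V (S i) j)%Z) = zsum N (fun i => (V i j + H i (S j))%Z)).
    { apply zsum_ext. intros i Hi. apply turn_cocycle; apply Hadj; unfold adjacent; lia. }
    rewrite !zsum_add, (zsum_shift N (fun i => V i j)) in E. unfold T. lia. }
  assert (Hcols : forall m, (m <= N)%nat ->
    T m = (T O + zsum m (fun j => V N j) - zsum m (fun j => V O j))%Z).
  { induction m as [|m IH]; intros Hm; simpl; [lia|]. rewrite Hrow, IH by lia. lia. }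
  assert (C00 : Q O O = Q1) by (destruct (HL O), (HB O); lia || congruence).
  assert (CN0 : Q N O = Q0) by (destruct (HR O), (HB N); lia || congruence).
  assert (C0N : Q O N = Q2) by (destruct (HL N), (HT O); lia || congruence).
  assert (CNN : Q N N = Q3) by (destruct (HR N), (HT N); lia || congruence).
  assert (Hbottom : T O = (-1)%Z).
  { etransitivity; [apply (zsum_turn_half_plane N (fun i => Q i O) Q0), HB|].
    simpl. rewrite CN0, C00. reflexivity. }
  assert (Htop : T N = 1%Z).
  { etransitivity; [apply (zsum_turn_half_plane N (fun i => Q i N) Q2), HT|].
    simpl. rewrite CNN, C0N. reflexivity. }
  assert (Hright : zsum N (fun j => V N j) = (-1)%Z).
  { etransitivity; [apply (zsum_turn_half_plane N (fun j => Q N j) Q3), HR|].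
    simpl. rewrite CNN, CN0. reflexivity. }
  assert (Hleft : zsum N (fun j => V O j) = 1%Z).
  { etransitivity; [apply (zsum_turn_half_plane N (fun j => Q O j) Q1), HL|].
    simpl. rewrite C0N, C00. reflexivity. }
  pose proof (Hcols N (le_n N)). lia.
Qed.

(** * Width two is not enough *)

Lemma lipschitz_poincare_miranda (P : R -> R -> R * R) L m : 0 <= L -> 0 < m ->
  (forall s t s' t', in01 s -> in01 t -> in01 s' -> in01 t' ->
     norm_inf (vsub (P s t) (P s' t')) <= L * (Rabs (s - s') + Rabs (t - t'))) ->
  (forall s t, in01 s -> in01 t -> m <= norm_inf (P s t)) ->
  (forall t, in01 t -> fst (P 0 t) < 0) -> (forall t, in01 t -> 0 < fst (P 1 t)) ->
  (forall s, in01 s -> 0 < snd (P s 0)) -> (forall s, in01 s -> snd (P s 1) < 0) ->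
  False.
Proof.
  intros HL Hm Hlip Hlow Hleft Hright Hbottom Htop.
  destruct (exists_inv_nat_lt (m / (2 * L + 1))) as [N [HN HNm]];
    [apply Rdiv_lt_0_compat; lra|].
  assert (Hstep : 2 * L * / INR N < m).
  { apply (Rmult_lt_compat_r (2 * L + 1)) in HNm; [|lra].
    unfold Rdiv in HNm. rewrite Rmult_assoc, Rinv_l, Rmult_1_r in HNm by lra.
    pose proof (Rinv_0_lt_compat _ (lt_0_INR N ltac:(lia))). nra. }
  apply (discrete_poincare_miranda N (fun i j => quadrant_of (P (knot N i) (knot N j)))).
  - intros i j i' j' Hi Hj Hi' Hj' Hii' Hjj'.
    apply (quadrant_of_not_opposite m); [|apply Hlow; apply (knot_in01 N HN); assumption].
    eapply Rle_lt_trans; [apply Hlip; apply (knot_in01 N HN); assumption|].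
    pose proof (knot_adjacent N HN i i' Hii'). pose proof (knot_adjacent N HN j j' Hjj').
    nra.
  - intros j Hj. rewrite (knot_0 N HN). apply quadrant_of_fst_neg, Hleft, (knot_in01 N HN); assumption.
  - intros j Hj. rewrite (knot_n N HN). apply quadrant_of_fst_pos, Hright, (knot_in01 N HN); assumption.
  - intros i Hi. rewrite (knot_0 N HN). apply quadrant_of_snd_pos, Hbottom, (knot_in01 N HN); assumption.
  - intros i Hi. rewrite (knot_n N HN). apply quadrant_of_snd_neg, Htop, (knot_in01 N HN); assumption.
Qed.

(* [fstar] runs along the horizontal axis from (-1,0) to (1,0) on [0,1/3] and along the
   vertical axis from (0,1) to (0,-1) on [2/3,1]. *)
Definition fstar (x : R) : R * R :=
  (-1 + 6 * x - 9 * relu (x - 1/3) + 3 * relu (x - 2/3),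
   -3 * relu (x - 1/3) + 9 * relu (x - 2/3)).

Lemma fstar_continuous : continuous_on01 fstar.
Proof.
  intros x _ eps Heps. exists (eps / 18). split; [lra|]. intros y _ Hy.
  pose proof (relu_lipschitz (y - 1/3) (x - 1/3)) as R1.
  pose proof (relu_lipschitz (y - 2/3) (x - 2/3)) as R2.
  replace (y - 1/3 - (x - 1/3)) with (y - x) in R1 by ring.
  replace (y - 2/3 - (x - 2/3)) with (y - x) in R2 by ring.
  apply Rabs_le_inv in R1, R2. pose proof (Rabs_le_inv (y - x) _ (Rle_refl _)).
  unfold norm_inf, vsub, fstar; simpl. apply Rmax_lub_lt; apply Rabs_def1; lra.
Qed.

Lemma fstar_left s : 0 <= s <= 1/3 -> fstar s = (-1 + 6 * s, 0).
Proof. intros H. unfold fstar. rewrite !relu_eq0 by lra. f_equal; ring. Qed.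

Lemma fstar_right t : 2/3 <= t <= 1 -> fstar t = (0, 6 * t - 5).
Proof. intros H. unfold fstar. rewrite !relu_id by lra. f_equal; lra. Qed.

(* The two pieces of a curve near [fstar] must meet; a bi-Lipschitz curve cannot do so. *)
Lemma bilipschitz_not_near_fstar g : bilipschitz01 g ->
  ~ (forall x, in01 x -> norm_inf (vsub (g x) (fstar x)) <= 1/5).
Proof.
  intros [k [L [Hk [HL Hbl]]]] Hnear.
  set (l := fun s => s / 3). set (r := fun t => 2/3 + t / 3).
  assert (Hl : forall s, in01 s -> in01 (l s)) by (unfold in01, l; intros; lra).
  assert (Hr : forall t, in01 t -> in01 (r t)) by (unfold in01, r; intros; lra).
  assert (Hshrink : forall a b, Rabs (l a - l b) <= Rabs (a - b) /\ Rabs (r a - r b) <= Rabs (a - b)).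
  { intros a b. unfold l, r. split; unfold Rabs; repeat destruct Rcase_abs; lra. }
  assert (Hgl : forall s, in01 s ->
      Rabs (fst (g (l s)) - (-1 + 2 * s)) <= 1/5 /\ Rabs (snd (g (l s))) <= 1/5).
  { intros s Hs. pose proof (Hnear (l s) (Hl s Hs)) as H.
    rewrite fstar_left in H by (unfold in01, l in *; lra).
    pose proof (norm_inf_fst (vsub (g (l s)) (-1 + 6 * l s, 0))).
    pose proof (norm_inf_snd (vsub (g (l s)) (-1 + 6 * l s, 0))).
    simpl in *. rewrite Rminus_0_r in *. unfold l in *.
    replace (-1 + 2 * s) with (-1 + 6 * (s / 3)) by field. lra. }
  assert (Hgr : forall t, in01 t ->
      Rabs (fst (g (r t))) <= 1/5 /\ Rabs (snd (g (r t)) - (-1 + 2 * t)) <= 1/5).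
  { intros t Ht. pose proof (Hnear (r t) (Hr t Ht)) as H.
    rewrite fstar_right in H by (unfold in01, r in *; lra).
    pose proof (norm_inf_fst (vsub (g (r t)) (0, 6 * r t - 5))).
    pose proof (norm_inf_snd (vsub (g (r t)) (0, 6 * r t - 5))).
    simpl in *. rewrite Rminus_0_r in *. unfold r in *.
    replace (-1 + 2 * t) with (6 * (2/3 + t / 3) - 5) by field. lra. }
  apply (lipschitz_poincare_miranda (fun s t => vsub (g (l s)) (g (r t))) L (k / 3));
    [lra | lra | | | | | |].
  - intros s t s' t' Hs Ht Hs' Ht'.
    replace (vsub (vsub (g (l s)) (g (r t))) (vsub (g (l s')) (g (r t'))))
      with (vsub (vsub (g (l s)) (g (l s'))) (vsub (g (r t)) (g (r t'))))
      by (unfold vsub; simpl; f_equal; ring).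
    eapply Rle_trans; [apply norm_inf_sub|].
    destruct (Hbl (l s) (l s') (Hl s Hs) (Hl s' Hs')) as [_ B1].
    destruct (Hbl (r t) (r t') (Hr t Ht) (Hr t' Ht')) as [_ B2].
    destruct (Hshrink s s') as [S1 _]. destruct (Hshrink t t') as [_ S2].
    assert (L * Rabs (l s - l s') <= L * Rabs (s - s')) by (apply Rmult_le_compat_l; lra).
    assert (L * Rabs (r t - r t') <= L * Rabs (t - t')) by (apply Rmult_le_compat_l; lra).
    lra.
  - intros s t Hs Ht. destruct (Hbl (l s) (r t) (Hl s Hs) (Hr t Ht)) as [B _].
    assert (1/3 <= Rabs (l s - r t)).
    { unfold l, r, in01 in *. rewrite Rabs_left by lra. lra. }
    nra.
  - intros t Ht. destruct (Hgl 0 ltac:(unfold in01; lra)) as [A _].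
    destruct (Hgr t Ht) as [B _]. apply Rabs_le_inv in A, B. simpl. lra.
  - intros t Ht. destruct (Hgl 1 ltac:(unfold in01; lra)) as [A _].
    destruct (Hgr t Ht) as [B _]. apply Rabs_le_inv in A, B. simpl. lra.
  - intros s Hs. destruct (Hgl s Hs) as [_ A].
    destruct (Hgr 0 ltac:(unfold in01; lra)) as [_ B]. apply Rabs_le_inv in A, B. simpl. lra.
  - intros s Hs. destruct (Hgl s Hs) as [_ A].
    destruct (Hgr 1 ltac:(unfold in01; lra)) as [_ B]. apply Rabs_le_inv in A, B. simpl. lra.
Qed.

Theorem ge3_of_dense_width w : dense_width w -> (3 <= w)%nat.
Proof.
  intros Hdense. destruct (le_lt_dec 3 w) as [Hw | Hw]; [exact Hw | exfalso].
  destruct (Hdense fstar fstar_continuous (1/10) ltac:(lra)) as [ls [Hls [Hwidth Hnet]]].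
  destruct (narrow_net_bilipschitz_approx ls (1/10) Hls ltac:(lia) ltac:(lra))
    as [g [Hg Hgnet]].
  apply (bilipschitz_not_near_fstar g Hg). intros x Hx.
  pose proof (norm_inf_sub_triang (g x) (net_fun ls x) (fstar x)) as Htri.
  pose proof (Hnet x Hx) as H1. pose proof (Hgnet x Hx) as H2.
  rewrite norm_inf_sub_sym in H1, H2. lra.
Qed.

Theorem theorem2 (w : nat) : dense_width w <-> (3 <= w)%nat.
Proof. split; [apply ge3_of_dense_width | apply dense_width_of_ge3]. Qed.
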